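(* Let $K$ be a perfect field of characteristic $p>0$ and let $\theta:K[x]\to K[x^p]$ be the $\mathbb{F}_p$-linear map $\theta(f)=f^p+\frac{d^{p-1}f}{dx^{p-1}}$. Then: (1) the associated graded map $\mathrm{gr}(\theta)$, which equals the Frobenius $F:K[x]\to K[x^p]$, $f\mapsto f^p$, is an isomorphism of $\mathbb{F}_p$-algebras; (2) $\theta$ is an isomorphism of $\mathbb{F}_p$-vector spaces such that $\theta(K[x]_{\le i})=K[x^p]_{\le i}$ for all $i\ge 0$; (3) for each $f\in K[x]$, $l(\theta(f))=l(f)^p$.
   Context: $K[x]_{\le i}=\{f\in K[x]\mid \deg_x f\le i\}$ and $K[x^p]_{\le i}=\{g\in K[x^p]\mid \deg_{x^p}g\le i\}$; these are filtrations whose associated graded algebras are canonically identified with $K[x]$ and $K[x^p]$, and $\theta$ respects them, i.e. $\theta(K[x]_{\le i})\subseteq K[x^p]_{\le i}$. For $f=\sum_{i=0}^d\lambda_ix^i$ with $\lambda_d\ne0$, the leading term is $l(f)=\lambda_dx^d$; for $g=\sum_{i=0}^d\mu_ix^{pi}\in K[x^p]$ with $\mu_d\neq 0$, $l(g)=\mu_dx^{pd}$. *)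

From HB Require Import structures.
From mathcomp Require Import all_boot all_order all_algebra.
Set Implicit Arguments. Unset Strict Implicit. Unset Printing Implicit Defensive.
Import Order.TTheory GRing.Theory Num.Theory.
Local Open Scope ring_scope.

Definition perfect_char (K : fieldType) (p : nat) : Prop :=
  forall y : K, exists x : K, x ^+ p = y.

Definition inKxp (K : fieldType) (p : nat) (g : {poly K}) : Prop :=
  forall i : nat, ~~ (p %| i)%N -> g`_i = 0.

Definition inKx_le (K : fieldType) (i : nat) (f : {poly K}) : Prop :=
  (size f <= i.+1)%N.

(* K[x^p]_{<= i} : elements of K[x^p] of (x^p)-degree <= i, i.e. x-degree <= p*i *)
Definition inKxp_le (K : fieldType) (p i : nat) (g : {poly K}) : Prop :=
  inKxp p g /\ (size g <= p * i + 1)%N.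

Definition theta (K : fieldType) (p : nat) (f : {poly K}) : {poly K} :=
  f ^+ p + f^`(p.-1).

Definition frob (K : fieldType) (p : nat) (f : {poly K}) : {poly K} := f ^+ p.

Definition lead_term (K : fieldType) (f : {poly K}) : {poly K} :=
  lead_coef f *: 'X^((size f).-1).

From HB Require Import structures.
From mathcomp Require Import all_boot all_order all_algebra.
From mathcomp Require Import zify.
Import Order.TTheory GRing.Theory Num.Theory.
Local Open Scope ring_scope.

(* The derivative f^`(p-1) has degree < p deg f and, because the product of
   the p - 1 consecutive integers i + 1, ..., i + p - 1 is divisible by p
   unless p | i, all its coefficients of exponent prime to p vanish.  So
   theta f lies in K[x^p] and shares size and leading coefficient with f^p,
   which gives (3), injectivity, and the inclusion of filtrations.
   Conversely, given g in K[x^p] of x^p-degree <= i + 1, perfectness yields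
   f0 with f0^p = g; then theta f0 - g = f0^`(p-1) has x^p-degree <= i, and
   induction on i gives surjectivity on each filtration step. *)

Lemma size_derivn {R : nzSemiRingType} (f : {poly R}) n :
  (size f^`(n) <= size f - n)%N.
Proof.
apply/leq_sizeP => j; rewrite leq_subLR => lt_j.
by rewrite coef_derivn nth_default ?mul0rn.
Qed.

(* (p.-1 + i) ^_ p = (p.-1 + i) ^_ p.-1 * i is a product of p consecutive integers. *)
Lemma prime_dvdn_ffact_pred p i :
  prime p -> ~~ (p %| i)%N -> (p %| (p.-1 + i) ^_ p.-1)%N.
Proof.
move=> p_pr ndvd_p_i.
have dvd_p_ffact : (p %| (p.-1 + i) ^_ p)%N.
  have [lt_p|le_p] := ltnP (p.-1 + i) p; first by rewrite ffact_small.
  by rewrite -bin_ffact dvdn_mull // dvdn_fact // prime_gt0 /=.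
move: dvd_p_ffact; rewrite -[X in _ ^_ X](prednK (prime_gt0 p_pr)) ffactnSr addKn.
by rewrite Euclid_dvdM // (negbTE ndvd_p_i) orbF.
Qed.

Lemma coef_derivn_pchar {R : nzRingType} {p} (pcharRp : p \in [pchar R])
    (f : {poly R}) i :
  ~~ (p %| i)%N -> (f^`(p.-1))`_i = 0.
Proof.
move=> ndvd_p_i; rewrite coef_derivn -mulr_natr.
have /eqP -> : ((p.-1 + i) ^_ p.-1)%:R == 0 :> R.
  by rewrite -(dvdn_pcharf pcharRp) prime_dvdn_ffact_pred ?(pcharf_prime pcharRp).
by rewrite mulr0.
Qed.

Lemma exp_pchar_comp {R : comNzRingType} {p} (pcharRp : p \in [pchar R])
    (f : {poly R}) :
  f ^+ p = map_poly (pFrobenius_aut pcharRp) f \Po 'X^p.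
Proof.
have p_gt0 := prime_gt0 (pcharf_prime pcharRp).
have pcharRXp : p \in [pchar {poly R}] by rewrite pchar_poly.
elim/poly_ind: f => [|f c IHf]; first by rewrite rmorph0 comp_poly0 expr0n gtn_eqF.
rewrite -(pFrobenius_autE pcharRXp) rmorphD rmorphM /= !pFrobenius_autE IHf.
rewrite rmorphD rmorphM /= map_polyX map_polyC /= comp_polyD comp_polyM.
by rewrite comp_polyX comp_polyC -rmorphXn /= pFrobenius_autE.
Qed.

Lemma coef_exp_pchar {R : comNzRingType} {p} (pcharRp : p \in [pchar R])
    (f : {poly R}) i :
  (f ^+ p)`_i = if (p %| i)%N then f`_(i %/ p) ^+ p else 0.
Proof.
rewrite (exp_pchar_comp pcharRp).
rewrite coef_comp_poly_Xn ?prime_gt0 ?(pcharf_prime pcharRp) //.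
by case: ifP => // _; rewrite coef_map /= pFrobenius_autE.
Qed.

Section Theta.

Context {K : fieldType} {p : nat}.
Hypothesis pcharKp : p \in [pchar K].
Implicit Types f g : {poly K}.

Let p_pr : prime p := pcharf_prime pcharKp.
Let p_gt0 : (0 < p)%N := prime_gt0 p_pr.
Let p_gt1 : (1 < p)%N := prime_gt1 p_pr.

Lemma pchar_polyK : p \in [pchar {poly K}].
Proof. by rewrite pchar_poly. Qed.

Lemma frobE : @frob K p =1 pFrobenius_aut pchar_polyK.
Proof. by move=> f; rewrite pFrobenius_autE. Qed.

Lemma frobD f g : frob p (f + g) = frob p f + frob p g.
Proof. by rewrite !frobE rmorphD. Qed.

Lemma frobB f g : frob p (f - g) = frob p f - frob p g.
Proof. by rewrite !frobE rmorphB. Qed.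

Lemma frobM f g : frob p (f * g) = frob p f * frob p g.
Proof. by rewrite !frobE rmorphM. Qed.

Lemma frob1 : @frob K p 1 = 1.
Proof. by rewrite frobE rmorph1. Qed.

Lemma frob_eq0 f : (frob p f == 0) = (f == 0).
Proof. by rewrite expf_eq0 p_gt0. Qed.

Lemma frob_inj : injective (@frob K p).
Proof. by move=> f g eq_fg; apply/eqP; rewrite -subr_eq0 -frob_eq0 frobB eq_fg subrr. Qed.

Lemma inKxp_frob f : inKxp p (frob p f).
Proof. by move=> i ndvd_p_i; rewrite /frob (coef_exp_pchar pcharKp) (negbTE ndvd_p_i). Qed.

Lemma size_frob f : f != 0 -> size (frob p f) = ((size f).-1 * p).+1.
Proof. by move=> nz_f; rewrite -size_exp prednK // size_poly_gt0 frob_eq0. Qed.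

Lemma size_frob_le i f : (size (frob p f) <= p * i + 1)%N = (size f <= i.+1)%N.
Proof.
have [-> | nz_f] := eqVneq f 0; first by rewrite /frob expr0n gtn_eqF // size_poly0.
by rewrite size_frob // addn1 ltnS mulnC leq_pmul2l // -ltnS prednK // size_poly_gt0.
Qed.

Lemma frob_surj_le (perfK : perfect_char K p) i g :
  inKxp_le p i g -> exists2 f, inKx_le i f & frob p f = g.
Proof.
move=> [inKxp_g size_g].
have ex_root y : exists x : K, x ^+ p == y by have [x <-] := perfK y; exists x.
pose f := \poly_(j < size g) xchoose (ex_root g`_(j * p)%N).
have frob_f : frob p f = g.
  apply/polyP => j; rewrite /frob (coef_exp_pchar pcharKp) coef_poly.
  have [dvd_p_j | /inKxp_g -> //] := boolP (p %| j)%N.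
  case: ltnP => [lt_jp | le_jp]; first by rewrite (eqP (xchooseP (ex_root _))) divnK.
  by rewrite expr0n gtn_eqF // nth_default // (leq_trans le_jp) ?leq_div.
by exists f; rewrite // /inKx_le -(size_frob_le i) frob_f.
Qed.

Lemma inKxp_le_size g : inKxp p g -> inKxp_le p (size g) g.
Proof. by split; rewrite // addn1 leqW // leq_pmull. Qed.

Lemma frob_surj (perfK : perfect_char K p) g :
  inKxp p g -> exists f, frob p f = g.
Proof. by move/inKxp_le_size/(frob_surj_le perfK) => [f]; exists f. Qed.

Lemma inKxp_le_derivn i f : inKx_le i.+1 f -> inKxp_le p i f^`(p.-1).
Proof.
rewrite /inKx_le => size_f; split; first exact: coef_derivn_pchar.
apply: leq_trans (size_derivn f p.-1) _; rewrite leq_subLR.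
by apply: leq_trans size_f _; have := leq_pmull i p_gt0; lia.
Qed.

Lemma theta_sub_frob f : theta p f - frob p f = f^`(p.-1).
Proof. by rewrite addrC addKr. Qed.

Lemma theta_const f : inKx_le 0 f -> theta p f = frob p f.
Proof.
by move=> size_f; rewrite /theta derivn_poly0 ?addr0 // (leq_trans size_f) // -ltnS prednK.
Qed.

Lemma size_derivn_lt_frob f : f != 0 -> (size f^`(p.-1) < size (frob p f))%N.
Proof.
move=> nz_f; apply: leq_ltn_trans (size_derivn f p.-1) _; rewrite size_frob //.
have := size_poly_gt0 f; rewrite nz_f; have := leq_pmulr (size f).-1 p_gt0; lia.
Qed.

Lemma theta0 : @theta K p 0 = 0.
Proof. by rewrite /theta expr0n gtn_eqF // linear0 addr0. Qed.

Lemma size_theta f : size (theta p f) = size (frob p f).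
Proof.
have [-> | nz_f] := eqVneq f 0; first by rewrite theta0 /frob expr0n gtn_eqF.
by rewrite size_polyDl ?size_derivn_lt_frob.
Qed.

Lemma lead_coef_theta f : lead_coef (theta p f) = lead_coef (frob p f).
Proof.
have [-> | nz_f] := eqVneq f 0; first by rewrite theta0 /frob expr0n gtn_eqF.
by rewrite lead_coefDl ?size_derivn_lt_frob.
Qed.

Lemma lead_term_theta f : lead_term (theta p f) = lead_term f ^+ p.
Proof.
rewrite /lead_term size_theta lead_coef_theta /frob.
by rewrite lead_coef_exp exprZn -exprM size_exp mulnC.
Qed.

Lemma thetaD f g : theta p (f + g) = theta p f + theta p g.
Proof. by rewrite /theta -!/(frob p _) frobD derivnD addrACA. Qed.

Lemma thetaB f g : theta p (f - g) = theta p f - theta p g.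
Proof. by rewrite /theta -!/(frob p _) frobB derivnB opprD addrACA. Qed.

Lemma theta_inj : injective (@theta K p).
Proof.
move=> f g eq_fg; apply/eqP; rewrite -subr_eq0 -frob_eq0 -size_poly_eq0.
by rewrite -size_theta thetaB eq_fg subrr size_poly0.
Qed.

Lemma inKxp_theta f : inKxp p (theta p f).
Proof.
move=> i ndvd_p_i; rewrite coefD -/(frob p f) inKxp_frob //.
by rewrite (coef_derivn_pchar pcharKp) ?addr0.
Qed.

Lemma theta_le i f : inKx_le i f -> inKxp_le p i (theta p f).
Proof.
move=> size_f; split; first exact: inKxp_theta.
by rewrite size_theta size_frob_le.
Qed.

Lemma theta_surj_le (perfK : perfect_char K p) i g :
  inKxp_le p i g -> exists2 f, inKx_le i f & theta p f = g.
Proof.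
elim: i g => [|i IHi] g /(frob_surj_le perfK) [f0 size_f0 frob_f0].
  by exists f0; rewrite ?theta_const.
have [f1 size_f1 theta_f1] := IHi _ (inKxp_le_derivn _ _ size_f0).
exists (f0 - f1); last by rewrite thetaB theta_f1 -theta_sub_frob frob_f0 subKr.
by rewrite /inKx_le (leq_trans (size_polyD _ _)) // size_polyN geq_max size_f0 ltnW.
Qed.

Lemma theta_surj (perfK : perfect_char K p) g :
  inKxp p g -> exists f, theta p f = g.
Proof. by move/inKxp_le_size/(theta_surj_le perfK) => [f]; exists f. Qed.

End Theta.

Theorem lemma2p1 (K : fieldType) (p : nat)
  (hp : p \in [pchar K]) (hperf : perfect_char K p) :
  (* (1) gr(theta) = F : on K[x]_{<= 0} theta = F, and for f in K[x]_{<= i+1},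
         theta f - F f lies in K[x^p]_{<= i} *)
  ((forall f : {poly K}, inKx_le 0 f -> theta p f = frob p f) /\
   (forall (i : nat) (f : {poly K}), inKx_le i.+1 f ->
        inKxp_le p i (theta p f - frob p f))) /\
  (*     F : K[x] -> K[x^p] is an isomorphism of F_p-algebras *)
  ((forall f g : {poly K}, frob p (f + g) = frob p f + frob p g) /\
   (forall f g : {poly K}, frob p (f * g) = frob p f * frob p g) /\
   @frob K p 1 = 1 /\
   (forall f : {poly K}, inKxp p (frob p f)) /\
   injective (@frob K p) /\
   (forall g : {poly K}, inKxp p g -> exists f, frob p f = g)) /\
  (* (2) theta : K[x] -> K[x^p] is an F_p-linear bijection with
         theta(K[x]_{<= i}) = K[x^p]_{<= i} *)
  ((forall f g : {poly K}, theta p (f + g) = theta p f + theta p g) /\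
   (forall f : {poly K}, inKxp p (theta p f)) /\
   injective (@theta K p) /\
   (forall g : {poly K}, inKxp p g -> exists f, theta p f = g) /\
   (forall (i : nat) (f : {poly K}), inKx_le i f -> inKxp_le p i (theta p f)) /\
   (forall (i : nat) (g : {poly K}), inKxp_le p i g ->
        exists f, inKx_le i f /\ theta p f = g)) /\
  (* (3) l(theta f) = l(f)^p *)
  (forall f : {poly K}, lead_term (theta p f) = lead_term f ^+ p).
Proof.
split; [split | split; [|split]].
- exact: theta_const hp.
- by move=> i f /(inKxp_le_derivn hp); rewrite theta_sub_frob.
- split; first exact: frobD hp.
  split; first exact: frobM hp.
  split; first exact: frob1 hp.
  split; first exact: inKxp_frob hp.
  split; first exact: frob_inj hp.
  exact: frob_surj hp hperf.
- split; first exact: thetaD hp.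
  split; first exact: inKxp_theta hp.
  split; first exact: theta_inj hp.
  split; first exact: theta_surj hp hperf.
  split; first exact: theta_le hp.
  by move=> i g /(theta_surj_le hp hperf) [f]; exists f.
- exact: lead_term_theta hp.
Qed.
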